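(* Let $p\ge1$ and let $G_1,G_2$ be finite discrete probability measures on $\mathbb{R}^d\times S_d^{++}(\mathbb{R})$. Suppose that for every $(\mu_0,\Sigma_0)\in\mathbb{R}^d\times S_d^{++}(\mathbb{R})$, $$\int d((\mu_1,\Sigma_1),(\mu_0,\Sigma_0))^p\,dG_1(\mu_1,\Sigma_1)<\infty\quad\text{and}\quad\int d((\mu_0,\Sigma_0),(\mu_2,\Sigma_2))^p\,dG_2(\mu_2,\Sigma_2)<\infty,$$ where $d((\mu_1,\Sigma_1),(\mu_2,\Sigma_2))=\sqrt{\|\mu_1-\mu_2\|_2^2+0.25\,\log(\lambda_{\max}(\Sigma_1,\Sigma_2))^2}$ and $\lambda_{\max}(\Sigma_1,\Sigma_2)$ is the largest eigenvalue $\lambda$ of the generalized eigenvalue problem $\Sigma_1u=\lambda\Sigma_2u$. Then $\text{SMix-}W_p^p(G_1,G_2)<\infty$.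
   Context: $S_d^{++}(\mathbb{R})$ is the set of $d\times d$ real symmetric positive definite matrices. Let $\mathbb{S}=\{w\in\mathbb{R}^2:\|w\|_2=1\}$ and $\mathbb{S}^{d-1}=\{v\in\mathbb{R}^d:\|v\|_2=1\}$, with $\mathcal{U}(\cdot)$ the uniform distribution. For $v\in\mathbb{S}^{d-1}$ and $w=(w_1,w_2)\in\mathbb{S}$ set $P_{v,w}(\mu,\Sigma)=w_1\langle v,\mu\rangle+w_2\log\big(\sqrt{v^\top\Sigma v}\big)$. For finite discrete probability measures $G_1,G_2$ on $\mathbb{R}^d\times S_d^{++}(\mathbb{R})$ the sliced mixture Wasserstein distance is $$\text{SMix-}W_p^p(G_1,G_2)=\mathbb{E}_{(w,v)\sim\mathcal{U}(\mathbb{S})\otimes\mathcal{U}(\mathbb{S}^{d-1})}\big[W_p^p(P_{v,w}\sharp G_1,P_{v,w}\sharp G_2)\big],$$ where $\sharp$ denotes push-forward and $W_p^p(\alpha,\beta)=\inf_{\pi\in\Pi(\alpha,\beta)}\int|x-y|^p\,d\pi(x,y)$ is the $p$-th power of the Wasserstein-$p$ distance between probability measures on $\mathbb{R}$. *)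

From HB Require Import structures.
From mathcomp Require Import all_boot all_order all_algebra.
From mathcomp Require Import all_classical all_reals all_analysis.
Set Implicit Arguments. Unset Strict Implicit. Unset Printing Implicit Defensive.
Import Order.TTheory GRing.Theory Num.Theory.
Import numFieldNormedType.Exports.
Local Open Scope classical_set_scope.
Local Open Scope ring_scope.

Section Defs.
Variable R : realType.

Definition l2norm (k : nat) (v : 'cV[R]_k) : R :=
  Num.sqrt (\sum_(i < k) v i 0 ^+ 2).

Definition dotv (k : nat) (u v : 'cV[R]_k) : R := \sum_(i < k) u i 0 * v i 0.

Definition qform (k : nat) (S : 'M[R]_k) (v : 'cV[R]_k) : R := (v^T *m S *m v) 0 0.

Definition spd (k : nat) (S : 'M[R]_k) : Prop :=
  S^T = S /\ forall u : 'cV[R]_k, u != 0 -> 0 < qform S u.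

Definition gen_eigvals (k : nat) (S1 S2 : 'M[R]_k) : set R :=
  [set l | exists u : 'cV[R]_k, u != 0 /\ S1 *m u = l *: (S2 *m u)].
Definition lambda_max (k : nat) (S1 S2 : 'M[R]_k) : R := sup (gen_eigvals S1 S2).

Definition gdist (k : nat) (m1 : 'cV[R]_k) (S1 : 'M[R]_k)
  (m2 : 'cV[R]_k) (S2 : 'M[R]_k) : R :=
  Num.sqrt (l2norm (m1 - m2) ^+ 2 + (1/4) * (ln (lambda_max S1 S2)) ^+ 2).

(* A finite discrete measure  sum_i wt i * delta_(mu i, Sig i)  on R^d x S_d^{++}. *)
Record fdmeas (k : nat) := FDMeas {
  natoms : nat;
  wt : 'I_natoms -> R;
  atom_mu : 'I_natoms -> 'cV[R]_k;
  atom_Sig : 'I_natoms -> 'M[R]_k }.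
Arguments wt {k} f _.
Arguments atom_mu {k} f _.
Arguments atom_Sig {k} f _.

Definition is_fdprob (k : nat) (G : fdmeas k) : Prop :=
  (forall i, 0 <= wt G i) /\ (\sum_i wt G i = 1) /\ (forall i, spd (atom_Sig G i)).

Definition fd_integral (k : nat) (G : fdmeas k)
  (f : 'cV[R]_k -> 'M[R]_k -> R) : \bar R :=
  (\sum_i (wt G i)%:E * (f (atom_mu G i) (atom_Sig G i))%:E)%E.

Definition Pvw (k : nat) (v : 'cV[R]_k) (w : 'cV[R]_2)
  (m : 'cV[R]_k) (S : 'M[R]_k) : R :=
  w 0 0 * dotv v m + w 1 0 * ln (Num.sqrt (qform S v)).

Definition pushfd (k : nat) (f : 'cV[R]_k -> 'M[R]_k -> R) (G : fdmeas k)
  : set R -> \bar R :=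
  fun A => (\sum_i (wt G i * \1_A (f (atom_mu G i) (atom_Sig G i)))%:E)%E.

Definition couplings (alpha beta : set R -> \bar R) : set (probability (R * R)%type R) :=
  [set pi | forall A : set R, measurable A ->
      pi (A `*` setT) = alpha A /\ pi (setT `*` A) = beta A].

Definition Wpp (p : R) (alpha beta : set R -> \bar R) : \bar R :=
  ereal_inf [set (\int[pi]_(z in setT) ((`|z.1 - z.2|) `^ p)%:E)%E
            | pi in couplings alpha beta].

Fixpoint iter_int (k : nat) (f : (nat -> R) -> \bar R) : \bar R :=
  match k with
  | 0 => f (fun _ => 0)
  | k'.+1 => (\int[lebesgue_measure]_(t in [set: R])
                iter_int k' (fun x => f (fun j => if j == k' then t else x j)))%E
  end.

Definition vec_of (k : nat) (x : nat -> R) : 'cV[R]_k := \col_(i < k) x i.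

(* Expectation of g over v ~ U(S^{k-1}), via the normalized cone measure:
   E[g(v)] = (1/|B_k|) int_{0 < |x| <= 1} g(x/|x|) dx. *)
Definition E_sphere (k : nat) (g : 'cV[R]_k -> \bar R) : \bar R :=
  (iter_int k (fun x => let y := vec_of k x in
      if ((0 < l2norm y) && (l2norm y <= 1))%R then g ((l2norm y)^-1 *: y)%R else 0%E)
   * ((fine (iter_int k (fun x => if (l2norm (vec_of k x) <= 1)%R then 1%E else 0%E)))^-1)%:E)%E.

(* SMix-W_p^p(G1,G2) = E_{(w,v) ~ U(S) x U(S^{d-1})}[W_p^p(P_{v,w}#G1, P_{v,w}#G2)],
   written as an iterated expectation (Tonelli). *)
Definition SMixWpp (k : nat) (p : R) (G1 G2 : fdmeas k) : \bar R :=
  E_sphere (fun w : 'cV[R]_2 => E_sphere (fun v : 'cV[R]_k =>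
     Wpp p (pushfd (Pvw v w) G1) (pushfd (Pvw v w) G2))).

End Defs.

(* For unit vectors v and w every atom (mu, Sigma) of G1 or G2 is sent by
   P_{v,w} into a bounded interval that does not depend on (v, w):
   |<v, mu>| <= sum_i |mu_i|, and v^T Sigma v is pinched between
   1 / |Sigma^-1|_1 and |Sigma|_1 (entrywise l1 norms), the lower bound coming
   from Cauchy-Schwarz for the form of Sigma: 1 = (v^T v)^2 <= (v^T Sigma v)
   (v^T Sigma^-1 v).  The product coupling of the two (finitely supported)
   push-forwards then bounds W_p^p uniformly in (v, w), and a uniform bound
   survives both sphere averages, which only integrate over the unit ball,
   inside the cube [-1, 1]^k. *)

From HB Require Import structures.
From mathcomp Require Import all_boot all_order all_algebra.
From mathcomp Require Import all_classical all_reals all_analysis.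
From mathcomp Require Import ring lra measurable_realfun.
Import Order.TTheory GRing.Theory Num.Theory.
Local Open Scope ring_scope.
Set Implicit Arguments. Unset Strict Implicit. Unset Printing Implicit Defensive.

Arguments wt {R k} f _.
Arguments atom_mu {R k} f _.
Arguments atom_Sig {R k} f _.

Section euclidean.
Context (R : realType) (k : nat).
Implicit Types (v : 'cV[R]_k).

Lemma dotvv v : dotv v v = l2norm v ^+ 2.
Proof.
rewrite /l2norm sqr_sqrtr; last by apply: sumr_ge0 => i _; exact: sqr_ge0.
by apply: eq_bigr => i _; rewrite expr2.
Qed.

Lemma norm_coord_le_l2norm v i : `|v i 0| <= l2norm v.
Proof.
have sq_ge0 j : 0 <= v j 0 ^+ 2 by exact: sqr_ge0.
rewrite -sqrtr_sqr ler_sqrt; last exact: sumr_ge0.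
by rewrite (bigD1 i) //= lerDl sumr_ge0.
Qed.

Lemma dotv_unit_coord v i : dotv v v = 1 -> `|v i 0| <= 1.
Proof.
move=> v1; have <- : l2norm v = 1.
  by apply/eqP; rewrite -(eqrXn2 (n := 2)) ?sqrtr_ge0 // -dotvv v1 expr1n.
exact: norm_coord_le_l2norm.
Qed.

Lemma dotv_normalize v : 0 < l2norm v ->
  dotv ((l2norm v)^-1 *: v) ((l2norm v)^-1 *: v) = 1.
Proof.
move=> v0; rewrite /dotv; under eq_bigr do rewrite !mxE mulrACA.
by rewrite -mulr_sumr -/(dotv v v) dotvv -expr2 -exprMn mulVf ?expr1n ?gt_eqF.
Qed.

End euclidean.

Section sphere_average.
Context (R : realType).
Local Open Scope ereal_scope.

Lemma ge0_le_integralT d (T : measurableType d) (mu : {measure set T -> \bar R})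
    (f g : T -> \bar R) :
  (forall x, 0 <= f x) -> (forall x, f x <= g x) ->
  \int[mu]_(x in setT) f x <= \int[mu]_(x in setT) g x.
Proof.
move=> f0 fg; have g0 x : 0 <= g x by exact: le_trans (f0 x) (fg x).
rewrite !ge0_integralTE //; apply: le_ereal_sup => _ [h hf <-].
by exists h => // x; exact: le_trans (hf x) (fg x).
Qed.

Lemma iter_int_ge0 k (f : (nat -> R) -> \bar R) :
  (forall x, 0 <= f x) -> 0 <= iter_int k f.
Proof.
elim: k f => [|k IH] f f0 /=; first exact: f0.
by apply: integral_ge0 => t _; apply: IH => x; exact: f0.
Qed.

Lemma integral_indic_unit_interval (c : R) :
  \int[lebesgue_measure]_(t in [set: R]) (if `|t| <= 1 then c else 0)%R%:E
  = (c * 2)%:E.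
Proof.
pose I : set R := `[(-1)%R, 1%R]%classic.
transitivity (\int[lebesgue_measure]_(t in I) (cst c%:E) t).
  rewrite [RHS]integral_mkcond; apply: eq_integral => t _.
  by rewrite patchE mem_setE /I /= in_itv /= -ler_norml; case: ifP.
have := @lebesgue_measure_itv R `[(-1)%R, 1%R]; rewrite /= lte_fin gtrN ?ltr01 // => vol.
rewrite integral_cst; last exact: measurable_itv.
by rewrite [X in _ * X]vol -EFinD -EFinM opprK.
Qed.

Lemma iter_int_le_cube k (f : (nat -> R) -> \bar R) (C : R) : (0 <= C)%R ->
  (forall x, 0 <= f x) ->
  (forall x, f x <= (if [forall j : 'I_k, `|x j| <= 1] then C else 0)%R%:E) ->
  iter_int k f <= (C * 2 ^+ k)%:E.
Proof.
elim: k f C => [|k IH] f C C0 f0 fC /=.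
  by rewrite expr0 mulr1; apply: le_trans (fC _) _; case: ifP; rewrite ?lee_fin.
apply: le_trans (@ge0_le_integralT _ _ lebesgue_measure _ (fun t =>
  (if `|t| <= 1 then C * 2 ^+ k else 0)%R%:E) _ _) _.
- by move=> t; apply: iter_int_ge0 => x; exact: f0.
- move=> t; apply: le_trans (IH _ (if `|t| <= 1 then C else 0)%R _ _ _) _.
  + by case: ifP.
  + by move=> x; exact: f0.
  + move=> x; apply: le_trans (fC _) _; rewrite lee_fin.
    case: ifPn => [/fintype.forallP cube|_]; last by case: ifP => // _; case: ifP.
    have -> : (`|t| <= 1)%R by have := cube ord_max; rewrite /= eqxx.
    suff -> : [forall j : 'I_k, `|x j| <= 1]%R by [].
    apply/fintype.forallP => j; have := cube (widen_ord (leqnSn k) j).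
    by rewrite /= ifF // ltn_eqF.
  + by case: ifP; rewrite ?mul0r.
- by rewrite integral_indic_unit_interval exprSr mulrA.
Qed.

Definition unit_ball_volume k : \bar R :=
  iter_int k (fun x => if (l2norm (vec_of k x) <= 1)%R then 1 else 0).

Lemma unit_ball_volume_ge0 k : 0 <= unit_ball_volume k.
Proof. by apply: iter_int_ge0 => x; case: ifP. Qed.

Lemma E_sphere_ge0 k (g : 'cV[R]_k -> \bar R) :
  (forall v, 0 <= g v) -> 0 <= E_sphere g.
Proof.
move=> g0; rewrite /E_sphere -/(unit_ball_volume k).
rewrite mule_ge0 ?lee_fin ?invr_ge0 ?fine_ge0 ?unit_ball_volume_ge0 //.
by apply: iter_int_ge0 => x /=; case: ifP.
Qed.

Lemma E_sphere_le k (g : 'cV[R]_k -> \bar R) (B : R) : (0 <= B)%R ->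
  (forall v, 0 <= g v) -> (forall v, dotv v v = 1%R -> g v <= B%:E) ->
  E_sphere g <= (B * 2 ^+ k / fine (unit_ball_volume k))%:E.
Proof.
move=> B0 g0 gB; rewrite /E_sphere -/(unit_ball_volume k).
set X := iter_int _ _.
have X0 : 0 <= X by apply: iter_int_ge0 => x /=; case: ifP.
have XB : X <= (B * 2 ^+ k)%:E.
  apply: iter_int_le_cube => // x /=; first by case: ifP.
  case: ifPn => [/andP[v0 v1]|_]; last by case: ifP; rewrite ?lee_fin.
  have -> : [forall j : 'I_k, `|x j| <= 1]%R.
    apply/fintype.forallP => j.
    by have := le_trans (norm_coord_le_l2norm (vec_of k x) j) v1; rewrite mxE.
  exact/gB/dotv_normalize.
have Xfin : X \is a fin_num by rewrite ge0_fin_numE // (le_lt_trans XB) ?ltry.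
rewrite -(fineK Xfin) -EFinM lee_fin ler_wpM2r ?invr_ge0 ?fine_ge0 //.
  exact: unit_ball_volume_ge0.
by rewrite -lee_fin fineK.
Qed.

End sphere_average.

Section spd_quadratic_form.
Context (R : realType) (k : nat).
Implicit Types (S A : 'M[R]_k) (v x y : 'cV[R]_k).

Definition bform S x y : R := (x^T *m S *m y) 0 0.

Lemma bformC S x y : S^T = S -> bform S y x = bform S x y.
Proof.
move=> sym; rewrite /bform.
have -> : (y^T *m S *m x) 0 0 = (y^T *m S *m x)^T 0 0 by rewrite [RHS]mxE.
by rewrite !trmx_mul trmxK sym mulmxA.
Qed.

Lemma qformDZ S x y t : S^T = S ->
  qform S (x + t *: y) = qform S x + 2 * t * bform S x y + t ^+ 2 * qform S y.
Proof.
move=> sym; rewrite /qform.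
have -> : (x + t *: y)^T = x^T + t *: y^T by apply/matrixP => i j; rewrite !mxE.
rewrite !mulmxDl !mulmxDr.
have addE (A B : 'M[R]_1) : (A + B) 0 0 = A 0 0 + B 0 0 by rewrite mxE.
have scaleE a (A : 'M[R]_1) : (a *: A) 0 0 = a * A 0 0 by rewrite mxE.
rewrite -!scalemxAl -!scalemxAr !addE !scaleE.
rewrite -/(bform S x y) -/(bform S y x) bformC //; ring.
Qed.

Lemma qform_trmx A v : qform A^T v = qform A v.
Proof.
have -> : qform A v = (v^T *m A *m v)^T 0 0 by rewrite [RHS]mxE.
by rewrite !trmx_mul trmxK mulmxA.
Qed.

Lemma spd_qform_ge0 S v : spd S -> 0 <= qform S v.
Proof.
move=> [_ pos]; have [->|v0] := eqVneq v 0; last exact/ltW/pos.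
by rewrite /qform !mulmx0 mxE.
Qed.

Lemma spd_unitmx S : spd S -> S \in unitmx.
Proof.
move=> [_ pos]; rewrite unitmxE unitfE; apply/negP => /det0P [v v0 vS].
have := pos v^T; rewrite trmx_eq0 => /(_ v0).
by rewrite /qform trmxK vS mul0mx mxE ltxx.
Qed.

Lemma spd_CauchySchwarz S x y : spd S ->
  bform S x y ^+ 2 <= qform S x * qform S y.
Proof.
move=> spdS; have [->|y0] := eqVneq y 0.
  by rewrite /bform /qform !mulmx0 !mxE mulr0 expr0n.
have c0 : 0 < qform S y by exact: spdS.2.
have := spd_qform_ge0 (x + (- bform S x y / qform S y) *: y) spdS.
rewrite qformDZ; last exact: spdS.1.
(* t = -b/c minimises t |-> qform S (x + t y). *)
have -> : qform S x + 2 * (- bform S x y / qform S y) * bform S x y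
          + (- bform S x y / qform S y) ^+ 2 * qform S y
        = (qform S x * qform S y - bform S x y ^+ 2) / qform S y.
  by field; rewrite gt_eqF.
by rewrite pmulr_lge0 ?invr_gt0 // subr_ge0.
Qed.

Lemma spd_qform_mul_inv_ge1 S v : spd S -> dotv v v = 1 ->
  1 <= qform S v * qform (invmx S) v.
Proof.
move=> spdS v1; have Su := spd_unitmx spdS.
have b1 : bform S v (invmx S *m v) = 1.
  rewrite /bform mulmxA -(mulmxA v^T) mulmxV // mulmx1 -v1 /dotv mxE.
  by apply: eq_bigr => i _; rewrite mxE.
have qinv : qform S (invmx S *m v) = qform (invmx S) v.
  rewrite /qform trmx_mul !mulmxA -(mulmxA _ S) mulmxV // mulmx1.
  by rewrite -/(qform (invmx S)^T v) qform_trmx.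
by have := spd_CauchySchwarz v (invmx S *m v) spdS; rewrite b1 qinv expr1n.
Qed.

Definition mx_abs_sum A : R := \sum_i \sum_j `|A i j|.

Lemma norm_qform_le A v :
  (forall i, `|v i 0| <= 1) -> `|qform A v| <= mx_abs_sum A.
Proof.
move=> v1; rewrite /qform /mx_abs_sum mxE.
rewrite (exchange_big _ _ _ _ _ (fun i j => `|A i j|)).
apply: le_trans (ler_norm_sum _ _ _) _; apply: ler_sum => j _.
rewrite normrM mxE; apply: le_trans (ler_wpM2l (normr_ge0 _) (v1 j)) _.
rewrite mulr1; apply: le_trans (ler_norm_sum _ _ _) _; apply: ler_sum => i _.
by rewrite !mxE normrM ler_piMl.
Qed.

End spd_quadratic_form.

Section atom_projection_bound.
Context (R : realType).

Lemma norm_ln_le (lo x hi : R) : 0 < lo -> lo <= x <= hi ->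
  `|ln x| <= `|ln lo| + `|ln hi|.
Proof.
move=> lo0 /andP[lox xhi]; have x0 := lt_le_trans lo0 lox.
have hi0 := lt_le_trans x0 xhi.
have lnlo : ln lo <= ln x by rewrite ler_ln ?posrE.
have lnhi : ln x <= ln hi by rewrite ler_ln ?posrE.
have := ler_norm (ln hi); have := ler_norm (- ln lo); rewrite normrN.
have := normr_ge0 (ln lo); have := normr_ge0 (ln hi).
by move=> *; rewrite ler_norml; apply/andP; split; lra.
Qed.

Lemma spd_qform_unit_bounds k (S : 'M[R]_k) v : spd S -> dotv v v = 1 ->
  [/\ 0 < (mx_abs_sum (invmx S))^-1, (mx_abs_sum (invmx S))^-1 <= qform S v
      & qform S v <= mx_abs_sum S].
Proof.
move=> spdS v1; have v_le1 i := dotv_unit_coord i v1.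
have q_le A : qform A v <= mx_abs_sum A.
  exact: le_trans (ler_norm _) (norm_qform_le A v_le1).
have ge1 : 1 <= qform S v * mx_abs_sum (invmx S).
  apply: le_trans (spd_qform_mul_inv_ge1 spdS v1) _.
  by rewrite ler_wpM2l ?spd_qform_ge0 ?q_le.
have M0 : 0 < mx_abs_sum (invmx S).
  rewrite ltNge; apply/negP => M0.
  have : qform S v * mx_abs_sum (invmx S) <= 0.
    by rewrite mulr_ge0_le0 ?spd_qform_ge0.
  lra.
by split; rewrite ?invr_gt0 ?q_le // -(ler_pM2r M0) mulVf ?gt_eqF.
Qed.

Definition atom_bound k (m : 'cV[R]_k) (S : 'M[R]_k) : R :=
  \sum_i `|m i 0| + (`|ln (Num.sqrt (mx_abs_sum (invmx S))^-1)|
                     + `|ln (Num.sqrt (mx_abs_sum S))|).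

Lemma norm_Pvw_le k (v m : 'cV[R]_k) (w : 'cV[R]_2) (S : 'M[R]_k) :
  spd S -> dotv v v = 1 -> dotv w w = 1 -> `|Pvw v w m S| <= atom_bound m S.
Proof.
move=> spdS v1 w1; have v_le1 i := dotv_unit_coord i v1.
have w_le1 i := dotv_unit_coord i w1.
rewrite /Pvw /atom_bound; apply: le_trans (ler_normD _ _) _.
rewrite !normrM; apply: lerD; apply: le_trans (ler_wpM2r (normr_ge0 _) (w_le1 _)) _.
  rewrite mul1r; apply: le_trans (ler_norm_sum _ _ _) _; apply: ler_sum => i _.
  by rewrite normrM mulrC ler_piMr.
have [lo0 lo hi] := spd_qform_unit_bounds spdS v1.
have q0 := lt_le_trans lo0 lo.
rewrite mul1r norm_ln_le ?sqrtr_gt0 // !ler_sqrt ?lo ?hi //; last exact: ltW.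
exact/ltW/(lt_le_trans q0).
Qed.

End atom_projection_bound.

Section fin_dirac_sum.
Context d (T : measurableType d) (R : realType) (I : finType).
Variables (c : I -> R) (z : I -> T).
Local Open Scope ereal_scope.

(* The masses |c i| make every summand a measure; for c >= 0 they are the c i. *)
Definition fin_dirac_sum : set T -> \bar R :=
  msum (fun n => if (insub n : option 'I_#|I|) is Some i
    then (mscale (NngNum (normr_ge0 (c (enum_val i)))) \d_(z (enum_val i))
          : {measure set T -> \bar R})
    else mzero) #|I|.

HB.instance Definition _ := Measure.on fin_dirac_sum.

Hypothesis c_ge0 : forall i, (0 <= c i)%R.

Lemma fin_dirac_sumE A : fin_dirac_sum A = \sum_i (c i)%:E * \d_(z i) A.
Proof.
rewrite /fin_dirac_sum /msum [RHS](reindex (@enum_val I I)) /=.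
  by apply: eq_bigr => i _; rewrite valK /= /mscale /= ger0_norm.
exact/onW_bij/enum_val_bij.
Qed.

Lemma integral_fin_dirac_sum (f : T -> \bar R) : (forall t, 0 <= f t) ->
  measurable_fun [set: T] f ->
  \int[fin_dirac_sum]_(t in setT) f t = \sum_i (c i)%:E * f (z i).
Proof.
move=> f0 mf; rewrite ge0_integral_measure_sum //.
rewrite [RHS](reindex (@enum_val I I)) /=.
  apply: eq_bigr => i _; rewrite valK ge0_integral_mscale //= integral_dirac //.
  by rewrite diracT mul1e ger0_norm.
exact/onW_bij/enum_val_bij.
Qed.

Hypothesis c_sum1 : (\sum_i c i = 1)%R.

Lemma fin_dirac_sumT : fin_dirac_sum setT = 1.
Proof.
rewrite fin_dirac_sumE -c_sum1 -sumEFin; apply: eq_bigr => i _.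
by rewrite diracT mule1.
Qed.

Definition fin_dirac_prob : probability T R :=
  HB.pack fin_dirac_sum (Measure_isProbability.Build _ _ _ _ fin_dirac_sumT).

End fin_dirac_sum.

Lemma Wpp_ge0 (R : realType) (p : R) (alpha beta : set R -> \bar R) :
  (0 <= Wpp p alpha beta)%E.
Proof.
apply: le_ereal_inf_tmp => _ [pi _ <-]; apply: integral_ge0 => u _.
by rewrite lee_fin powR_ge0.
Qed.

Section product_coupling.
Context (R : realType) (I J : finType).
Variables (a : I -> R) (b : J -> R) (x : I -> R) (y : J -> R).
Hypotheses (a_ge0 : forall i, 0 <= a i) (b_ge0 : forall j, 0 <= b j).
Hypotheses (a_sum1 : \sum_i a i = 1) (b_sum1 : \sum_j b j = 1).

Lemma prod_weight_ge0 (ij : I * J) : 0 <= a ij.1 * b ij.2.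
Proof. exact: mulr_ge0. Qed.

Lemma prod_weight_sum1 : \sum_(ij : I * J) a ij.1 * b ij.2 = 1.
Proof.
rewrite -(pair_bigA _ (fun i j => a i * b j)) /= -[RHS]a_sum1.
by apply: eq_bigr => i _; rewrite -mulr_sumr b_sum1 mulr1.
Qed.

Definition prod_coupling : probability (R * R)%type R :=
  fin_dirac_prob (fun ij : I * J => (x ij.1, y ij.2))
    prod_weight_ge0 prod_weight_sum1.

Local Open Scope ereal_scope.

Lemma prod_coupling_couplings :
  couplings (fin_dirac_sum a x) (fin_dirac_sum b y) prod_coupling.
Proof.
move=> A _; rewrite /= !(fin_dirac_sumE _ prod_weight_ge0) !fin_dirac_sumE //.
rewrite -!(pair_bigA _ (fun i j => (a i * b j)%:E * \d_(x i, y j) _)) /=.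
split.
  apply: eq_bigr => i _.
  under eq_bigr do rewrite diracE in_setX /= in_setT andbT -EFinM mulrAC.
  by rewrite sumEFin diracE -EFinM -mulr_sumr b_sum1 mulr1.
rewrite exchange_big /=; apply: eq_bigr => j _.
under eq_bigr do rewrite diracE in_setX /= in_setT /= -EFinM -mulrA.
by rewrite sumEFin diracE -EFinM -mulr_suml a_sum1 mul1r.
Qed.

Lemma Wpp_fin_dirac_sum_le (p B : R) : (0 <= p)%R ->
  (forall i j, `|x i - y j| <= B)%R ->
  Wpp p (fin_dirac_sum a x) (fin_dirac_sum b y) <= (B `^ p)%:E.
Proof.
move=> p0 xyB; apply: le_trans (ereal_inf_lbound _) _.
  by exists prod_coupling => //; exact: prod_coupling_couplings.
have cost_mf : measurable_fun [set: R * R] (fun u => ((`|u.1 - u.2|) `^ p)%:E).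
  apply/measurable_EFinP/(measurableT_comp (measurable_powR p)).
  exact/measurableT_comp/measurable_funB.
have cost_ge0 u : 0 <= ((`|u.1 - u.2|) `^ p)%:E :> \bar R.
  by rewrite lee_fin powR_ge0.
rewrite [leLHS](integral_fin_dirac_sum _ prod_weight_ge0) //=.
rewrite -[leRHS]mul1e -(EFinM _ (B `^ p)) -prod_weight_sum1 mulr_suml -sumEFin.
apply: lee_sum => ij _; rewrite -EFinM lee_fin ler_wpM2l ?prod_weight_ge0 //.
by apply: ge0_ler_powR; rewrite ?nnegrE ?(le_trans _ (xyB ij.1 ij.2)).
Qed.

End product_coupling.

Section sliced_projection_bound.
Context (R : realType) (k : nat).

Lemma pushfd_fin_dirac_sum (f : 'cV[R]_k -> 'M[R]_k -> R) (G : fdmeas R k) :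
  (forall i, 0 <= wt G i) ->
  pushfd f G = fin_dirac_sum (wt G) (fun i => f (atom_mu G i) (atom_Sig G i)).
Proof.
by move=> wt_ge0; apply/funext => A; rewrite fin_dirac_sumE.
Qed.

Lemma atom_bound_ge0 (m : 'cV[R]_k) (S : 'M[R]_k) : 0 <= atom_bound m S.
Proof. by rewrite /atom_bound !addr_ge0 ?sumr_ge0. Qed.

Definition fdmeas_bound (G : fdmeas R k) : R :=
  \sum_i atom_bound (atom_mu G i) (atom_Sig G i).

Lemma norm_Pvw_atom_le (G : fdmeas R k) v w i : is_fdprob G ->
  dotv v v = 1 -> dotv w w = 1 ->
  `|Pvw v w (atom_mu G i) (atom_Sig G i)| <= fdmeas_bound G.
Proof.
move=> [_ [_ spdG]] v1 w1; apply: le_trans (norm_Pvw_le _ (spdG i) v1 w1) _.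
rewrite /fdmeas_bound (bigD1 i) //= lerDl.
by apply: sumr_ge0 => j _; exact: atom_bound_ge0.
Qed.

Lemma Wpp_pushfd_Pvw_le (G1 G2 : fdmeas R k) p v w : 0 <= p ->
  is_fdprob G1 -> is_fdprob G2 -> dotv v v = 1 -> dotv w w = 1 ->
  (Wpp p (pushfd (Pvw v w) G1) (pushfd (Pvw v w) G2)
   <= ((fdmeas_bound G1 + fdmeas_bound G2) `^ p)%:E)%E.
Proof.
move=> p0 G1prob G2prob v1 w1; have [wt1_ge0 [wt1_sum1 _]] := G1prob.
have [wt2_ge0 [wt2_sum1 _]] := G2prob.
rewrite !pushfd_fin_dirac_sum //; apply: Wpp_fin_dirac_sum_le => // i j.
apply: le_trans (ler_normB _ _) _.
by apply: lerD; exact: norm_Pvw_atom_le.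
Qed.

End sliced_projection_bound.

Theorem proposition3 (R : realType) (d : nat) (p : R) (G1 G2 : fdmeas R d) :
  (0 < d)%N -> 1 <= p ->
  is_fdprob G1 -> is_fdprob G2 ->
  (forall (m0 : 'cV[R]_d) (S0 : 'M[R]_d), spd S0 ->
     (fd_integral G1 (fun m1 S1 => (gdist m1 S1 m0 S0 `^ p)%R) < +oo)%E /\
     (fd_integral G2 (fun m2 S2 => (gdist m0 S0 m2 S2 `^ p)%R) < +oo)%E) ->
  (SMixWpp p G1 G2 < +oo)%E.
Proof.
move=> _ p1 G1prob G2prob _; have p0 : 0 <= p := le_trans ler01 p1.
set W := (fdmeas_bound G1 + fdmeas_bound G2) `^ p.
have W0 : 0 <= W := powR_ge0 _ _.
have inner_le w : dotv w w = 1 -> (E_sphere (fun v =>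
    Wpp p (pushfd (Pvw v w) G1) (pushfd (Pvw v w) G2))
    <= (W * 2 ^+ d / fine (unit_ball_volume R d))%:E)%E.
  move=> w1; apply: E_sphere_le => // [v|v v1]; first exact: Wpp_ge0.
  exact: Wpp_pushfd_Pvw_le.
apply: le_lt_trans (E_sphere_le _ _ inner_le) (ltry _).
  by rewrite !mulr_ge0 ?exprn_ge0 ?invr_ge0 ?fine_ge0 ?unit_ball_volume_ge0.
by move=> w; apply: E_sphere_ge0 => v; exact: Wpp_ge0.
Qed.
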